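(* There is an absolute constant $C$ such that for the Adaptive-Threshold Dealer with any $n$ and $d$, and every stage $\tau\ge 0$ of the Adaptive phase, $\mathbb E[\Phi(\mathbf X^\tau)]\le C\cdot d$.
   Context: Adaptive-Threshold Dealer with $d$ mini-decks on $n$ cards ($d\mid n$): the deck is split into $d$ mini-decks, each a fixed ordered stack of $n/d$ cards. Let $L_{i,t}$ be the number of cards drawn from mini-deck $i$ before turn $t$. Adaptive phase (turns $t=1,\dots,n-2d$): repeatedly sample $i\in[d]$ uniformly until $L_{i,t}<\lceil t/d\rceil+1$, then draw the top card of mini-deck $i$. Stage $\tau\ge1$ consists of the turns $t$ with $\lceil t/d\rceil=\tau$ (turns $(\tau-1)d+1,\dots,\tau d$). Let $\mathbf L_i^\tau$ be the number of cards drawn from mini-deck $i$ by the end of stage $\tau$ (i.e. in turns $1,\dots,\tau d$), and $\mathbf X_i^\tau=\tau+2-\mathbf L_i^\tau$ the number of holes at the end of stage $\tau$; $\mathbf X^0=(2,\dots,2)$. With $\epsilon=1/200$, the potential of a vector $x\in\mathbb Z^d$ is $\Phi(x)=\sum_{i=1}^d(1+\epsilon)^{x_i}$. *)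

From HB Require Import structures.
From mathcomp Require Import all_boot all_order all_algebra.
From mathcomp Require Import reals.
Set Implicit Arguments. Unset Strict Implicit. Unset Printing Implicit Defensive.
Import Order.TTheory GRing.Theory Num.Theory.
Local Open Scope ring_scope.

(* A state of the dealer: L i = number of cards drawn so far from mini-deck i. *)
Definition state (d : nat) := {ffun 'I_d -> nat}.

Definition ceil_div (t d : nat) : nat := ((t + d.-1) %/ d)%N.

Definition eligible (d t : nat) (L : state d) : {set 'I_d} :=
  [set i | (L i < (ceil_div t d).+1)%N].

Definition draw (d : nat) (L : state d) (i : 'I_d) : state d :=
  [ffun j => if j == i then (L j).+1 else L j].

(* One turn t of the Adaptive phase: i is resampled uniformly from [d] until it
   is eligible, i.e. i is uniform over the (nonempty) eligible set.
   step_exp t f L = E[f(state after turn t) | state before turn t = L]. *)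
Definition step_exp (R : realFieldType) (d t : nat) (f : state d -> R) (L : state d) : R :=
  (#|eligible t L|%:R)^-1 * \sum_(i in eligible t L) f (draw L i).

(* exp_from t k f L = E[f(state after turns t, ..., t+k-1) | state before turn t = L]. *)
Fixpoint exp_from (R : realFieldType) (d : nat) (t k : nat) (f : state d -> R) (L : state d)
  {struct k} : R :=
  match k with
  | 0 => f L
  | k'.+1 => step_exp t (fun L' => exp_from t.+1 k' f L') L
  end.

Definition L0 (d : nat) : state d := [ffun => 0%N].

Definition holes (d tau : nat) (L : state d) : 'I_d -> int :=
  fun i => (tau.+2)%:Z - (L i)%:Z.

Definition eps (R : realFieldType) : R := (200%:R)^-1.

Definition Phi (R : realFieldType) (d : nat) (x : 'I_d -> int) : R :=
  \sum_(i < d) (1 + eps R) ^ (x i).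

(* E[Phi(X^tau)]: stage tau ends at turn tau*d, the process starts at turn 1. *)
Definition expected_Phi (R : realFieldType) (d tau : nat) : R :=
  exp_from 1 (tau * d) (fun L => Phi R (holes tau L)) (L0 d).

From HB Require Import structures.
From mathcomp Require Import all_boot all_order all_algebra.
From mathcomp Require Import reals.
From mathcomp Require Import ring lra zify.
Set Implicit Arguments. Unset Strict Implicit. Unset Printing Implicit Defensive.
Import Order.TTheory GRing.Theory Num.Theory.
Local Open Scope ring_scope.

(* Write a = 1 + eps and q = 1 - 1/a.  As Phi(X) = a d + sum_i (a^X_i - a), it is
   enough to bound the excess E = sum_i (a^X_i - a), to which full mini-decks do not
   contribute.  Inside a stage with n turns left, and c_i further cards allowed from
   mini-deck i, the product
     psi = E * (1 + q (2 - B)),   B = n/d + sum_i w(c_i, n) / d^4,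
   does not increase in expectation: a draw from the eligible mini-deck i lowers E by
   q a^X_i and B by some l_i >= 0, and the weights w are designed so that the l_i of
   the eligible mini-decks sum to at most 1, which the decrease q E of E pays for.
   At a stage boundary all X_i grow by one, so E is multiplied by a up to an additive
   d (a^2 - a); but at most half of the mini-decks lag behind, which forces
   B >= 1 + 1/64 when the new stage starts.  Hence the expectation of psi contracts
   by a factor rho < 1 per stage up to O(d), and stays below 200 d.  When d < 4
   no potential is needed, as then X_i <= d + 1 <= 4. *)

Section Expectation.
Variables (R : realFieldType) (d : nat).
Implicit Types (f g : state d -> R) (L : state d).

Lemma eq_step_exp t f g L :
  {in eligible t L, forall i, f (draw L i) = g (draw L i)} ->
  step_exp t f L = step_exp t g L.
Proof. by move=> fg; rewrite /step_exp; congr (_ * _); apply: eq_bigr. Qed.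

Lemma ler_step_exp t f g L :
  {in eligible t L, forall i, f (draw L i) <= g (draw L i)} ->
  step_exp t f L <= step_exp t g L.
Proof. by move=> fg; apply: ler_wpM2l; [rewrite invr_ge0 | apply: ler_sum]. Qed.

Lemma step_exp_affine t f L (r b : R) : 0 <= b ->
  step_exp t (fun L' => r * f L' + b) L <= r * step_exp t f L + b.
Proof.
move=> b0; rewrite /step_exp big_split /= -mulr_sumr sumr_const.
set k := #|_|; rewrite mulrDr mulrCA lerD2l.
have [->|k_gt0] := posnP k; first by rewrite mulr0n mulr0.
by rewrite -[b *+ k]mulr_natr mulrCA mulVf ?mulr1 // pnatr_eq0 -lt0n.
Qed.

Lemma exp_fromD t k1 k2 f L :
  exp_from t (k1 + k2)%N f L = exp_from t k1 (exp_from (t + k1)%N k2 f) L.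
Proof.
elim: k1 t L => [|k1 IH] t L /=; first by rewrite addn0.
by apply: eq_step_exp => i _; rewrite IH addSnnS.
Qed.

Lemma exp_from_le_affine (P : nat -> state d -> Prop) t k f g (r b : R) L :
  (forall t L i, P t L -> i \in eligible t.+1 L -> P t.+1 (draw L i)) ->
  0 <= r -> 0 <= b -> P t L ->
  (forall L', P (t + k)%N L' -> f L' <= r * g L' + b) ->
  exp_from t.+1 k f L <= r * exp_from t.+1 k g L + b.
Proof.
move=> P_draw r0 b0; elim: k t L => [|k IH] t L PL fg /=.
  by apply: fg; rewrite addn0.
apply: le_trans (step_exp_affine _ _ _ _ b0).
apply: ler_step_exp => i elig_i; apply: IH; first exact: P_draw.
by move=> L'; rewrite addSnnS; apply: fg.
Qed.

Lemma exp_from_le_const (P : nat -> state d -> Prop) t k f (b : R) L :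
  (forall t L i, P t L -> i \in eligible t.+1 L -> P t.+1 (draw L i)) ->
  0 <= b -> P t L -> (forall L', P (t + k)%N L' -> f L' <= b) ->
  exp_from t.+1 k f L <= b.
Proof.
move=> P_draw b0 PL fb; rewrite -[b]add0r -(mul0r (exp_from t.+1 k f L)).
by apply: (exp_from_le_affine (P := P) (g := f)) => // L' /fb; rewrite mul0r add0r.
Qed.

End Expectation.

(* A necessary condition for [L] to be the state after [s] turns. *)
Definition dealt d s (L : state d) :=
  (\sum_(i < d) L i = s)%N /\ forall i, (L i <= (ceil_div s d).+1)%N.

Definition capped d s (L : state d) := forall i, (L i <= s.+1)%N.

(* Measured against stage [s]: [nholes s L i] is the number [X_i] of holes of
   mini-deck [i] if [L] is the state at the end of stage [s], and
   [allowance s L i] is the number of cards mini-deck [i] may still give during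
   stage [s]. *)
Definition nholes d s (L : state d) i := (s.+2 - L i)%N.
Definition allowance d s (L : state d) i := (s.+1 - L i)%N.

Lemma sum_draw d (L : state d) i :
  (\sum_(j < d) draw L i j = (\sum_(j < d) L j).+1)%N.
Proof.
rewrite (bigD1 i) //= [in RHS](bigD1 i) //= ffunE eqxx addSn; congr (_.+1 + _)%N.
by apply: eq_bigr => j /negbTE ji; rewrite ffunE ji.
Qed.

Lemma dealt0 d : dealt 0 (L0 d).
Proof. by split=> [|i]; rewrite ?big1 // => *; rewrite ffunE. Qed.

Lemma dealt_draw d t (L : state d) i :
  dealt t L -> i \in eligible t.+1 L -> dealt t.+1 (draw L i).
Proof.
move=> [sumL capL]; rewrite inE => elig_i; split; first by rewrite sum_draw sumL.
move=> j; rewrite ffunE; case: eqP => [->|_] //.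
by apply: leq_trans (capL j) _; rewrite ltnS leq_div2r // leq_add2r.
Qed.

Lemma ceil_div_mul d s : (0 < d)%N -> ceil_div (s * d) d = s.
Proof. by move=> d0; rewrite /ceil_div divnMDl // divn_small ?addn0 // prednK. Qed.

Lemma ceil_div_stage d s n : (0 < d)%N -> (n < d)%N -> (0 < s)%N ->
  ceil_div (s * d - n) d = s.
Proof.
move=> d0 nd s0; have sd : (d <= s * d)%N by rewrite leq_pmull.
rewrite /ceil_div (_ : s * d - n + d.-1 = s * d + (d.-1 - n))%N; last by lia.
by rewrite divnMDl // divn_small ?addn0 //; lia.
Qed.

Lemma dealt_capped d s (L : state d) : (0 < d)%N -> dealt (s * d) L -> capped s L.
Proof. by move=> d0 [_ capL] i; rewrite -(ceil_div_mul s d0). Qed.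

Lemma dealt_few_behind d s (L : state d) : (0 < d)%N -> dealt (s * d) L ->
  (2 * \sum_(i < d) (L i < s : nat) <= d)%N.
Proof.
move=> d0 [sumL capL].
have : (\sum_(i < d) (L i + 2 * (L i < s)) <= \sum_(i < d) s.+1)%N.
  apply: leq_sum => i _; have := capL i; rewrite ceil_div_mul //.
  by case: ltnP => /=; lia.
rewrite big_split /= sumL -big_distrr /= sum_nat_const card_ord; lia.
Qed.

Lemma nholes_le d s (L : state d) i : (0 < d)%N -> dealt (s * d) L ->
  (nholes s L i <= d.+1)%N.
Proof.
move=> d0 [sumL capL]; move: sumL; rewrite (bigD1 i) //=.
have : (\sum_(j < d | j != i) L j <= \sum_(j < d | j != i) s.+1)%N.
  by apply: leq_sum => j _; have := capL j; rewrite ceil_div_mul.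
have : (\sum_(j < d) s.+1 = s.+1 + \sum_(j < d | j != i) s.+1)%N by rewrite (bigD1 i).
rewrite sum_nat_const card_ord /nholes mulnS [(s * d)%N]mulnC.
set A := (\sum_(j < d | _) L j)%N; set B := (\sum_(j < d | _) s.+1)%N; lia.
Qed.

Lemma natr_mul_pred_ge0 (R : realFieldType) n : 0 <= (n%:R : R) * (n%:R - 1).
Proof. by case: n => [|n]; rewrite ?mul0r // -natr1 addrK mulr_ge0 ?addr_ge0. Qed.

Lemma natr_mul_pred2_ge0 (R : realFieldType) n :
  0 <= (n%:R : R) * (n%:R - 1) * (n%:R - 2).
Proof.
case: n => [|[|n]]; rewrite ?mul0r ?subrr ?mulr0 ?mul0r //.
rewrite -addn2 natrD; have := ler0n R n; nra.
Qed.

Section Weight.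
Variables (R : realFieldType) (d : nat).

(* The weight of a mini-deck from which [c] more cards may be drawn while [n]
   turns of the stage remain. *)
Definition weight c n : R :=
  let N : R := n%:R in let D : R := d%:R in
  match c with
  | 0 => N * D ^+ 2
  | 1 => N * (N - 1) * D / 3%:R
  | 2 => N * (N - 1) * (N - 2) / 12%:R
  | _ => 0
  end.

Lemma weight_ge0 c n : 0 <= weight c n.
Proof.
have h1 := natr_mul_pred_ge0 R n; have h2 := natr_mul_pred2_ge0 R n.
case: c => [|[|[|c]]] //=.
- by apply: mulr_ge0; rewrite ?exprn_ge0.
- by apply: mulr_ge0; rewrite ?invr_ge0 // mulr_ge0.
- by apply: mulr_ge0; rewrite ?invr_ge0.
Qed.

Lemma weight_le c n : (n <= d)%N -> weight c n <= d%:R ^+ 3.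
Proof.
move=> nd; have D0 := ler0n R d; have N0 := ler0n R n.
have ND : (n%:R : R) <= d%:R by rewrite ler_nat.
have h1 := natr_mul_pred_ge0 R n; have h2 := natr_mul_pred2_ge0 R n.
have h3 : (n%:R : R) * (n%:R - 1) <= d%:R * d%:R by nra.
case: c => [|[|[|c]]] /=; rewrite ?exprn_ge0 // !exprS expr0 mulr1.
- by apply: ler_wpM2r; rewrite ?mulr_ge0.
- have := mulr_ge0 h1 D0; nra.
- nra.
Qed.

Lemma weight_leS c n : weight c n <= weight c n.+1.
Proof.
have D0 := ler0n R d; have N0 := ler0n R n; have h1 := natr_mul_pred_ge0 R n.
case: c => [|[|[|c]]] //=; rewrite -[n.+1%:R]natr1.
- by apply: ler_wpM2r; rewrite ?exprn_ge0 ?lerDl.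
- have : (n%:R : R) * (n%:R - 1) * d%:R <= (n%:R + 1) * (n%:R + 1 - 1) * d%:R.
    by apply: ler_wpM2r => //; nra.
  lra.
- have : (n%:R : R) * (n%:R - 1) * (n%:R - 2)
         <= (n%:R + 1) * (n%:R + 1 - 1) * (n%:R + 1 - 2).
    nra.
  lra.
Qed.

Lemma weight0S n : weight 0 n.+1 - weight 0 n = d%:R ^+ 2.
Proof. by rewrite /= -[n.+1%:R]natr1; ring. Qed.

Lemma weight_n0 c : weight c 0 = 0.
Proof. by case: c => [|[|[|c]]] /=; rewrite ?mul0r. Qed.

(* Spending one unit of allowance pays for [d] times the loss of one turn. *)
Lemma weight_step c n : (n < d)%N -> (0 < c)%N ->
  d%:R * (weight c n.+1 - weight c n) <= weight c.-1 n - weight c n.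
Proof.
move=> nd c0; have D0 := ler0n R d; have N0 := ler0n R n.
have h1 := natr_mul_pred_ge0 R n; have h2 := natr_mul_pred2_ge0 R n.
have ND : (n%:R + 1 : R) <= d%:R by rewrite natr1 ler_nat.
case: c c0 => [|[|[|[|c]]]] // _ /=; rewrite -?[n.+1%:R]natr1.
- have -> : (n%:R + 1) * (n%:R + 1 - 1) * d%:R / 3%:R - n%:R * (n%:R - 1) * d%:R / 3%:R
           = 2%:R * n%:R * d%:R / 3%:R :> R by field.
  have : (n%:R : R) * d%:R * (n%:R - 1) <= n%:R * d%:R * d%:R.
    by apply: ler_wpM2l; [exact: mulr_ge0 | lra].
  rewrite expr2; lra.
- have -> : (n%:R + 1) * (n%:R + 1 - 1) * (n%:R + 1 - 2) / 12%:R
           - n%:R * (n%:R - 1) * (n%:R - 2) / 12%:R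
           = n%:R * (n%:R - 1) / 4%:R :> R by field.
  have : (n%:R : R) * (n%:R - 1) * (n%:R - 2) <= n%:R * (n%:R - 1) * d%:R.
    by apply: ler_wpM2l => //; lra.
  lra.
- lra.
- lra.
Qed.

Lemma weight_stage_start c : (4 <= d)%N -> (c <= 2)%N ->
  d%:R ^+ 3 / 32%:R <= weight c d.
Proof.
move=> d4 c2; have D4 : (4%:R : R) <= d%:R by rewrite ler_nat.
have key : d%:R ^+ 3 / 32%:R <= (d%:R : R) * (d%:R - 1) * (d%:R - 2) / 12%:R.
  have : (0 : R) <= d%:R * (5%:R * d%:R ^+ 2 - 24%:R * d%:R + 16%:R).
    apply: mulr_ge0; first lra.
    have : (0 : R) <= (d%:R - 4) * (5%:R * d%:R - 4) by apply: mulr_ge0; lra.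
    rewrite expr2; lra.
  rewrite !exprS expr0 mulr1; lra.
case: c c2 => [|[|[|c]]] // _ /=; apply: (le_trans key).
- have : (d%:R : R) * (d%:R - 1) * (d%:R - 2) <= d%:R * d%:R ^+ 2.
    rewrite expr2; nra.
  lra.
- have : (d%:R : R) * (d%:R - 1) * (d%:R - 2) <= d%:R * (d%:R - 1) * d%:R.
    by apply: ler_wpM2l; [apply: mulr_ge0; lra | lra].
  lra.
Qed.

End Weight.

Lemma sum_weight_draw (R : realFieldType) d s n (L : state d) i :
  \sum_(l < d) weight R d (allowance s (draw L i) l) n =
  \sum_(l < d) weight R d (allowance s L l) n
    + (weight R d (allowance s L i).-1 n - weight R d (allowance s L i) n).
Proof.
rewrite (bigD1 i) //= [in RHS](bigD1 i) //= /allowance ffunE eqxx subnS.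
rewrite (eq_bigr (fun l => weight R d (s.+1 - L l) n)); first by ring.
by move=> l /negbTE li; rewrite ffunE li.
Qed.

Definition gap (R : realFieldType) (a : R) := 1 - a^-1.

Section Potential.
Variables (R : realFieldType) (a : R) (d : nat).
Hypothesis a_ge1 : 1 <= a.
Local Notation q := (gap a).
Implicit Types L : state d.

Definition excess s L : R := \sum_(i < d) (a ^+ nholes s L i - a).

(* [n] counts the turns left in stage [s]. *)
Definition budget s n L : R :=
  n%:R / d%:R + (\sum_(i < d) weight R d (allowance s L i) n) / d%:R ^+ 4.

Definition damping s n L : R := 1 + q * (2 - budget s n L).

Definition psi s n L : R := excess s L * damping s n L.

Lemma gap_ge0 : 0 <= q.
Proof. by rewrite subr_ge0 invf_le1 // (lt_le_trans ltr01). Qed.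

Lemma gap_mulX k : q * a ^+ k.+1 = a ^+ k.+1 - a ^+ k.
Proof.
have a0 : a != 0 by rewrite gt_eqF // (lt_le_trans ltr01).
by rewrite mulrBl mul1r exprS mulKf.
Qed.

Lemma excess_ge0 s L : capped s L -> 0 <= excess s L.
Proof.
move=> capL; apply: sumr_ge0 => i _; rewrite subr_ge0 -{1}(expr1 a).
by rewrite ler_weXn2l // /nholes subn_gt0 ltnS.
Qed.

Lemma excess_draw s L i : (L i <= s)%N ->
  excess s (draw L i) = excess s L - q * a ^+ nholes s L i.
Proof.
move=> Lis; rewrite /excess (bigD1 i) //= [in RHS](bigD1 i) //=.
rewrite (eq_bigr (fun j => a ^+ nholes s L j - a)); last first.
  by move=> j /negbTE ji; rewrite /nholes ffunE ji.
rewrite /nholes ffunE eqxx subSS [(s.+2 - _)%N]subSn 1?ltnW // gap_mulX; ring.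
Qed.

Lemma excessS s L : capped s L ->
  excess s.+1 L = a * excess s L + d%:R * (a ^+ 2 - a).
Proof.
move=> capL; rewrite /excess mulr_sumr mulr_natl -[X in _ *+ X]card_ord -sumr_const.
rewrite -big_split; apply: eq_bigr => i _ /=.
rewrite /nholes subSn 1?ltnW ?ltnS // exprS; ring.
Qed.

Lemma budget_le2 s n L : (0 < d)%N -> (n <= d)%N -> budget s n L <= 2.
Proof.
move=> d0 nd; have D0 : (0 : R) < d%:R by rewrite ltr0n.
have h1 : (n%:R : R) / d%:R <= 1 by rewrite ler_pdivrMr // mul1r ler_nat.
suff : (\sum_(i < d) weight R d (allowance s L i) n) / d%:R ^+ 4 <= 1.
  by rewrite /budget; lra.
rewrite ler_pdivrMr ?exprn_gt0 // mul1r.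
apply: le_trans (_ : \sum_(i < d) (d%:R : R) ^+ 3 <= _).
  by apply: ler_sum => i _; apply: weight_le.
by rewrite sumr_const card_ord -[_ *+ d]mulr_natr -exprSr.
Qed.

Lemma damping_ge1 s n L : (0 < d)%N -> (n <= d)%N -> 1 <= damping s n L.
Proof.
move=> d0 nd; rewrite /damping lerDl mulr_ge0 ?gap_ge0 // subr_ge0.
exact: budget_le2.
Qed.

Lemma damping0 s L : damping s 0 L = 1 + 2%:R * q.
Proof.
rewrite /damping /budget big1 => [|i _]; last exact: weight_n0.
by rewrite !mul0r; ring.
Qed.

Section Step.
Variables (s n t : nat) (L : state d).
Hypotheses (d_gt0 : (0 < d)%N) (n_lt_d : (n < d)%N) (stage_t : ceil_div t d = s).

Local Notation loss i := (budget s n.+1 L - budget s n (draw L i)).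
Local Notation wdiff l :=
  (weight R d (allowance s L l) n.+1 - weight R d (allowance s L l) n).
Local Notation wspend i :=
  (weight R d (allowance s L i).-1 n - weight R d (allowance s L i) n).

Lemma eligibleE i : (i \in eligible t L) = (L i <= s)%N.
Proof. by rewrite inE stage_t ltnS. Qed.

Lemma budget_lossE i :
  d%:R ^+ 4 * loss i = d%:R ^+ 3 + \sum_(l < d) wdiff l - wspend i.
Proof.
rewrite /budget sum_weight_draw -[n.+1%:R]natr1 sumrB.
by field; rewrite pnatr_eq0 -lt0n.
Qed.

Lemma budget_loss_ge0 i : 0 <= loss i.
Proof.
have D4 : (0 : R) < d%:R ^+ 4 by rewrite exprn_gt0 // ltr0n.
rewrite -(pmulr_rge0 _ D4) budget_lossE.
have : 0 <= \sum_(l < d) wdiff l by apply: sumr_ge0 => l _; rewrite subr_ge0 weight_leS.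
have := weight_le R (allowance s L i).-1 (ltnW n_lt_d).
have := weight_ge0 R d (allowance s L i) n; lra.
Qed.

Lemma sum_budget_loss_le1 : \sum_(i in eligible t L) loss i <= 1.
Proof.
have D4 : (0 : R) < d%:R ^+ 4 by rewrite exprn_gt0 // ltr0n.
set E := eligible t L; set T := \sum_(l < d) wdiff l.
have T_ge0 : 0 <= T by apply: sumr_ge0 => l _; rewrite subr_ge0 weight_leS.
have full_wdiff l : l \notin E -> d%:R * wdiff l = d%:R ^+ 3.
  rewrite eligibleE -ltnNge => Lls.
  by rewrite /allowance (eqP (_ : s.+1 - L l == 0)%N) ?subn_eq0 // weight0S -exprS.
have dT : d%:R * T <= \sum_(i in E) wspend i + \sum_(l < d | l \notin E) d%:R ^+ 3.
  rewrite /T mulr_sumr (bigID (mem E)) /= [X in _ + X <= _](eq_bigr _ full_wdiff) lerD2r.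
  apply: ler_sum => l; rewrite eligibleE => Lls.
  by apply: weight_step; rewrite // /allowance subn_gt0 ltnS.
have kT : \sum_(i in E) T <= d%:R * T.
  rewrite mulr_natl -[X in _ *+ X]card_ord -sumr_const.
  by rewrite [X in _ <= X](bigID (mem E)) /= lerDl sumr_ge0.
rewrite -(ler_pM2l D4) mulr1 mulr_sumr (eq_bigr _ (fun i _ => budget_lossE i)).
have -> : d%:R ^+ 4 = \sum_(l < d) d%:R ^+ 3 :> R.
  by rewrite sumr_const card_ord exprSr mulr_natr.
rewrite [X in _ <= X](bigID (mem E)) /= sumrB big_split /=.
lra.
Qed.

Hypothesis capL : capped s L.

Lemma excess_eligible :
  excess s L = \sum_(i in eligible t L) (a ^+ nholes s L i - a).
Proof.
rewrite /excess (bigID (mem (eligible t L))) /= [X in _ + X]big1 ?addr0 // => l.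
rewrite eligibleE -ltnNge => Lls.
by rewrite /nholes (_ : s.+2 - L l = 1)%N ?expr1 ?subrr //; have := capL l; lia.
Qed.

Lemma psi_draw_le i : i \in eligible t L ->
  psi s n (draw L i) <= psi s n.+1 L + q * excess s L * loss i
                        - q * damping s n.+1 L * (a ^+ nholes s L i - a).
Proof.
rewrite eligibleE => Lis; rewrite /psi excess_draw //.
have -> : damping s n (draw L i) = damping s n.+1 L + q * loss i.
  by rewrite /damping; ring.
have a_le : a <= a ^+ nholes s L i by rewrite -{1}(expr1 a) ler_weXn2l // /nholes; lia.
have q0 := gap_ge0; have loss_ge0 := budget_loss_ge0 i.
have V1 := damping_ge1 s L d_gt0 n_lt_d.
have : 0 <= q * (q * a ^+ nholes s L i * loss i).
  by rewrite !mulr_ge0 // (le_trans _ a_le) // (le_trans ler01).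
have : 0 <= q * damping s n.+1 L * a by rewrite !mulr_ge0 // (le_trans ler01).
nra.
Qed.

Lemma psi_step : step_exp t (psi s n) L <= psi s n.+1 L.
Proof.
have P0 := excess_ge0 capL; have V1 := damping_ge1 s L d_gt0 n_lt_d.
have q0 := gap_ge0; have loss_le1 := sum_budget_loss_le1.
rewrite /step_exp; set k := #|eligible t L|.
have [->|k_gt0] := posnP k; first by rewrite invr0 mul0r mulr_ge0 //; lra.
rewrite mulrC ler_pdivrMr ?ltr0n //.
apply: le_trans (ler_sum _ psi_draw_le) _.
rewrite sumrB big_split /= -!mulr_sumr -excess_eligible sumr_const -/k.
rewrite -[_ *+ k]mulr_natr /psi.
have : 0 <= q * excess s L * (1 - \sum_(i in eligible t L) loss i).
  by rewrite !mulr_ge0 // subr_ge0.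
have : 0 <= q * excess s L * (damping s n.+1 L - 1) by rewrite !mulr_ge0 // subr_ge0.
nra.
Qed.

End Step.

Lemma psi_stage s n L : (0 < d)%N -> (0 < s)%N -> (n <= d)%N -> capped s L ->
  exp_from (s * d - n).+1 n (psi s 0) L <= psi s n L.
Proof.
move=> d0 s0; have sd : (d <= s * d)%N by rewrite leq_pmull.
elim: n L => [|n IH] L nd capL //=.
have stage_t : ceil_div (s * d - n.+1).+1 d = s.
  by rewrite (_ : (s * d - n.+1).+1 = s * d - n)%N ?ceil_div_stage //; lia.
apply: le_trans (psi_step d0 nd stage_t capL); apply: ler_step_exp => i.
rewrite inE stage_t ltnS => Lis.
rewrite (_ : (s * d - n.+1).+2 = (s * d - n).+1)%N; last by lia.
apply: IH; first exact: ltnW.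
by move=> j; rewrite ffunE; case: eqP => [->|_].
Qed.

Lemma budget_stage_start s L : (4 <= d)%N -> dealt (s * d) L ->
  1 + 64%:R^-1 <= budget s.+1 d L.
Proof.
move=> d4 dealtL; have d0 : (0 < d)%N by apply: leq_trans d4.
have capL := dealt_capped d0 dealtL.
have D0 : (0 : R) < d%:R by rewrite ltr0n.
set c : R := d%:R ^+ 3 / 32%:R.
have c0 : 0 <= c by rewrite mulr_ge0 ?exprn_ge0 ?invr_ge0 ?ler0n.
have : \sum_(i < d) (1 - (L i < s : nat)%:R) * c
       <= \sum_(i < d) weight R d (allowance s.+1 L i) d.
  apply: ler_sum => i _; case: ltnP => /= Lis; first by rewrite subrr mul0r weight_ge0.
  by rewrite subr0 mul1r weight_stage_start // /allowance; have := capL i; lia.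
rewrite -mulr_suml sumrB sumr_const card_ord -natr_sum.
have := dealt_few_behind d0 dealtL; set m := (\sum_(i < d) _)%N => few.
have {few}m_le : 2%:R * (m%:R : R) <= d%:R by rewrite -natrM ler_nat.
move=> sum_ge; have : d%:R ^+ 4 / 64%:R <= \sum_(i < d) weight R d (allowance s.+1 L i) d.
  apply: le_trans sum_ge; rewrite (_ : _ / 64%:R = d%:R / 2%:R * c); last first.
    by rewrite /c exprS; field.
  by apply: ler_wpM2r => //; rewrite -[1 *+ d]/(d%:R); lra.
rewrite /budget divff ?pnatr_eq0 -?lt0n // lerD2l ler_pdivlMr ?exprn_gt0 //.
by rewrite mulrC.
Qed.

Definition contraction : R := a * (1 + q * (63%:R / 64%:R)) / (1 + 2%:R * q).
Definition drift : R := (a ^+ 2 - a) * (1 + q * (63%:R / 64%:R)).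

Lemma psi_next_stage s L : (4 <= d)%N -> dealt (s * d) L ->
  psi s.+1 d L <= contraction * psi s 0 L + drift * d%:R.
Proof.
move=> d4 dealtL; have d0 : (0 < d)%N by apply: leq_trans d4.
have capL := dealt_capped d0 dealtL.
have P0 := excess_ge0 capL; have q0 := gap_ge0; have D0 := ler0n R d.
have B := budget_stage_start d4 dealtL.
rewrite /psi excessS // damping0.
have -> : contraction * (excess s L * (1 + 2%:R * q)) + drift * d%:R =
          (a * excess s L + d%:R * (a ^+ 2 - a)) * (1 + q * (63%:R / 64%:R)).
  by rewrite /contraction /drift; field; rewrite gt_eqF //; lra.
have a0 : 0 <= a by apply: le_trans a_ge1.
have a2 : 0 <= a ^+ 2 - a by rewrite subr_ge0 expr2 ler_peMr.
apply: ler_wpM2l; first by rewrite addr_ge0 ?mulr_ge0.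
rewrite /damping lerD2l ler_wpM2l //; lra.
Qed.

End Potential.

Lemma expected_psi_le (R : realFieldType) (a C : R) d s : 1 <= a -> (4 <= d)%N ->
  (a ^+ 2 - a) * (1 + 2%:R * gap a) <= C -> contraction a * C + drift a <= C ->
  exp_from 1 (s * d) (psi a s 0) (L0 d) <= C * d%:R.
Proof.
move=> a1 d4 init fixC; have d0 : (0 < d)%N by apply: leq_trans d4.
have D0 := ler0n R d; have q0 := gap_ge0 a1.
have a0 : 0 <= a by apply: le_trans a1.
have contr0 : 0 <= contraction a by rewrite /contraction !mulr_ge0 ?invr_ge0 //; lra.
have drift0 : 0 <= drift a.
  by rewrite /drift mulr_ge0 ?subr_ge0 ?expr2 ?ler_peMr //; lra.
elim: s => [|s IH].
  rewrite /= /psi damping0 /excess.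
  rewrite (eq_bigr (fun _ => a ^+ 2 - a)) => [|i _]; last by rewrite /nholes ffunE.
  by rewrite sumr_const card_ord -[_ *+ d]mulr_natr mulrAC; apply: ler_wpM2r.
rewrite mulSnr exp_fromD.
apply: le_trans (_ : contraction a * exp_from 1 (s * d) (psi a s 0) (L0 d)
                     + drift a * d%:R <= _).
  apply: (@exp_from_le_affine R d (@dealt d)) => //;
    [exact: dealt_draw | exact: mulr_ge0 | exact: dealt0 | move=> L dealtL].
  apply: le_trans (psi_next_stage a1 d4 dealtL).
  have capL : capped s.+1 L by move=> i; apply/leqW/(dealt_capped d0 dealtL).
  have := psi_stage a1 d0 (ltn0Sn s) (leqnn d) capL.
  by rewrite mulSnr addnK add1n.
have := ler_wpM2l contr0 IH; have := ler_wpM2r D0 fixC; nra.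
Qed.

Lemma one_add_epsE (R : realFieldType) : 1 + eps R = 201%:R / 200%:R.
Proof. by rewrite /eps; field. Qed.

Lemma gap_one_add_eps (R : realFieldType) : gap (1 + eps R) = 201%:R^-1.
Proof. by rewrite /gap one_add_epsE; field. Qed.

Lemma expected_psi_eps_le (R : realFieldType) d s : (4 <= d)%N ->
  exp_from 1 (s * d) (psi (1 + eps R) s 0) (L0 d) <= 200%:R * d%:R.
Proof.
move=> d4; apply: expected_psi_le => //.
- by rewrite lerDl /eps invr_ge0 ler0n.
- rewrite gap_one_add_eps one_add_epsE.
  have -> : ((201%:R / 200%:R) ^+ 2 - 201%:R / 200%:R) * (1 + 2%:R * 201%:R^-1)
            = 203%:R / (200%:R * 200%:R) :> R by field.
  lra.
- rewrite /contraction /drift gap_one_add_eps one_add_epsE.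
  have -> : 201%:R / 200%:R * (1 + 201%:R^-1 * (63%:R / 64%:R)) / (1 + 2%:R * 201%:R^-1)
            = 201%:R * (64%:R * 201%:R + 63%:R) / (64%:R * 200%:R * 203%:R) :> R by field.
  have -> : ((201%:R / 200%:R) ^+ 2 - 201%:R / 200%:R) * (1 + 201%:R^-1 * (63%:R / 64%:R))
            = (64%:R * 201%:R + 63%:R) / (64%:R * 200%:R * 200%:R) :> R by field.
  lra.
Qed.

Lemma Phi_holes (R : realFieldType) d s (L : state d) : capped s L ->
  Phi R (holes s L) = \sum_(i < d) (1 + eps R) ^+ nholes s L i.
Proof. by move=> capL; apply: eq_bigr => i _; rewrite /holes subzn // ltnW ?ltnS. Qed.

Lemma Phi_holes_excess (R : realFieldType) d s (L : state d) : capped s L ->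
  Phi R (holes s L) = excess (1 + eps R) s L + d%:R * (1 + eps R).
Proof.
by move=> capL; rewrite Phi_holes // /excess sumrB sumr_const card_ord mulr_natl subrK.
Qed.

Lemma expected_Phi_le_large (R : realFieldType) d tau : (4 <= d)%N ->
  expected_Phi R d tau <= 202%:R * d%:R.
Proof.
move=> d4; have d0 : (0 < d)%N by apply: leq_trans d4.
have psi_le := expected_psi_eps_le R tau d4.
set a := 1 + eps R in psi_le *.
have a_eq : a = 201%:R / 200%:R by exact: one_add_epsE.
have a0 : 0 <= a by rewrite a_eq; lra.
set r := (1 + 2%:R * gap a)^-1.
have r0 : 0 <= r by rewrite invr_ge0 gap_one_add_eps; lra.
have r1 : r <= 1 by rewrite invf_le1 gap_one_add_eps; lra.
apply: le_trans (_ : r * exp_from 1 (tau * d) (psi a tau 0) (L0 d) + d%:R * a <= _).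
  apply: (@exp_from_le_affine R d (@dealt d)) => //;
    [exact: dealt_draw | exact: mulr_ge0 (ler0n R d) a0 | exact: dealt0 | ].
  move=> L; rewrite add0n => /(dealt_capped d0) capL.
  have q2 : 1 + 2%:R * gap a != 0 by rewrite gap_one_add_eps gt_eqF //; lra.
  by rewrite Phi_holes_excess // /psi damping0 mulrCA mulVf ?mulr1.
have := ler_wpM2l r0 psi_le; have := ler0n R d; rewrite a_eq; nra.
Qed.

Lemma expected_Phi_le_small (R : realFieldType) d tau : (0 < d)%N -> (d < 4)%N ->
  expected_Phi R d tau <= 2%:R * d%:R.
Proof.
move=> d0 d_lt4; set a := 1 + eps R.
have a_eq : a = 201%:R / 200%:R by exact: one_add_epsE.
have a1 : 1 <= a by rewrite a_eq; lra.
have a4 : a ^+ 4 <= 2%:R.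
  have a_le : a <= 11%:R / 10%:R by rewrite a_eq; lra.
  have a2_le : a ^+ 2 <= 121%:R / 100%:R by rewrite expr2; nra.
  have a2_ge0 := sqr_ge0 a; rewrite (_ : 4 = 2 * 2)%N // exprM [X in X <= _]expr2; nra.
apply: (@exp_from_le_const R d (@dealt d)) => //;
  [exact: dealt_draw | by rewrite mulr_ge0 | exact: dealt0 | ].
move=> L; rewrite add0n => dealtL.
rewrite (Phi_holes _ (dealt_capped d0 dealtL)).
apply: le_trans (_ : \sum_(i < d) a ^+ 4 <= _).
  apply: ler_sum => i _; apply: ler_weXn2l => //.
  by have := nholes_le i d0 dealtL; lia.
by rewrite sumr_const card_ord -[_ *+ d]mulr_natr ler_wpM2r.
Qed.

Theorem corollary3p5 (R : realType) :
  exists C : R, forall (n d : nat), (0 < d)%N -> (d %| n)%N ->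
    forall tau : nat, (tau * d <= n - 2 * d)%N ->
      expected_Phi R d tau <= C * d%:R.
Proof.
exists 202%:R => n d d0 _ tau _.
have [d_lt4|d4] := ltnP d 4; last exact: expected_Phi_le_large.
apply: le_trans (expected_Phi_le_small R tau d0 d_lt4) _.
by apply: ler_wpM2r; rewrite ?ler0n ?ler_nat.
Qed.
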